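(* Let $\mathcal{F}$ be a class of simple graphs and consider the assertions: (1) $\mathcal{F}$ is closed under edge contractions; (2) $\equiv_{\mathcal{F}}$ is preserved under right lexicographic products, i.e.\ for all simple graphs $G,G',H$, if $G\equiv_{\mathcal{F}}G'$ then $G\cdot H\equiv_{\mathcal{F}}G'\cdot H$; (3) $\mathrm{cl}(\mathcal{F})$ is closed under edge contractions. Then (1) implies (2), and (2) and (3) are equivalent.
   Context: All graphs are finite, undirected, without multiple edges; simple means without loops. $\hom(F,G)$ counts homomorphisms $F\to G$; $G\equiv_{\mathcal{F}}H$ means $\hom(F,G)=\hom(F,H)$ for all $F\in\mathcal{F}$; $\mathrm{cl}(\mathcal{F})$ is the class of all simple graphs $K$ such that for all simple $G,H$, $G\equiv_{\mathcal{F}}H$ implies $\hom(K,G)=\hom(K,H)$. The lexicographic product $G\cdot H$ has vertex set $V(G)\times V(H)$, with $(g,h)$ adjacent to $(g',h')$ iff either $g=g'$ and $hh'\in E(H)$, or $gg'\in E(G)$. For a partition $\mathcal{P}$ of $V(F)$, $F/\mathcal{P}$ is the simple graph on $\mathcal{P}$ with an edge $PQ$ ($P\neq Q$) iff some $p\in P,q\in Q$ are adjacent in $F$; a class is closed under edge contractions if it contains every graph isomorphic to $F/\mathcal{P}$ for $F$ in the class and $\mathcal{P}$ a partition of $V(F)$ with $F[P]$ connected for all $P\in\mathcal{P}$. *)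

From mathcomp Require Import all_boot.
Set Implicit Arguments. Unset Strict Implicit. Unset Printing Implicit Defensive.

Record sgraph := SGraph {
  vert :> finType;
  adj : rel vert;
  adj_sym : symmetric adj;
  adj_irr : irreflexive adj }.

Definition is_hom (F G : sgraph) (f : {ffun F -> G}) : bool :=
  [forall x : F, forall y : F, adj x y ==> adj (f x) (f y)].

Definition hom (F G : sgraph) : nat := #|[set f : {ffun F -> G} | is_hom f]|.

Definition gclass := sgraph -> Prop.

Definition hom_equiv (C : gclass) (G H : sgraph) : Prop :=
  forall K, C K -> hom K G = hom K H.

Definition cl (C : gclass) : gclass :=
  fun K => forall G H : sgraph, hom_equiv C G H -> hom K G = hom K H.

Definition iso (G H : sgraph) : Prop :=
  exists f : G -> H, bijective f /\ forall x y, adj (f x) (f y) = adj x y.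

Definition lex_adj (G H : sgraph) : rel (G * H)%type :=
  fun u v => ((u.1 == v.1) && adj u.2 v.2) || adj u.1 v.1.

Lemma lex_adj_sym G H : symmetric (@lex_adj G H).
Proof.
move=> [g h] [g' h']; rewrite /lex_adj /= eq_sym (adj_sym g g') (adj_sym h h').
by [].
Qed.

Lemma lex_adj_irr G H : irreflexive (@lex_adj G H).
Proof. by move=> [g h]; rewrite /lex_adj /= eqxx !adj_irr. Qed.

Definition lexprod (G H : sgraph) : sgraph :=
  SGraph (@lex_adj_sym G H) (@lex_adj_irr G H).

(* Quotient F/P for P a family of vertex sets (meaningful when P is a
   partition of V(F)): vertices are the blocks, PQ an edge iff P <> Q and
   some p in P is adjacent to some q in Q. *)
Section Quotient.
Variables (F : sgraph) (P : {set {set F}}).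

Definition qvert : finType := {X : {set F} | X \in P}.

Definition qadj : rel qvert :=
  fun X Y => (X != Y) && [exists p in val X, exists q in val Y, adj p q].

Lemma qadj_sym : symmetric qadj.
Proof.
move=> X Y; rewrite /qadj eq_sym; congr (_ && _).
apply/existsP/existsP => -[p /andP [pX /existsP [q /andP [qY pq]]]];
  exists q; rewrite qY /=; apply/existsP; exists p;
  by rewrite pX /= adj_sym.
Qed.

Lemma qadj_irr : irreflexive qadj.
Proof. by move=> X; rewrite /qadj eqxx. Qed.

Definition quotient_graph : sgraph := SGraph qadj_sym qadj_irr.
End Quotient.

Definition induced_connected (F : sgraph) (X : {set F}) : bool :=
  [forall x in X, forall y in X,
     connect [rel u v | [&& adj u v, u \in X & v \in X]] x y].

Definition contraction_closed (C : gclass) : Prop :=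
  forall (F : sgraph) (P : {set {set F}}),
    C F -> partition P [set: F] ->
    (forall X, X \in P -> induced_connected X) ->
    forall K : sgraph, iso K (quotient_graph P) -> C K.

Definition lex_preserved (C : gclass) : Prop :=
  forall G G' H : sgraph, hom_equiv C G G' ->
    hom_equiv C (lexprod G H) (lexprod G' H).

From mathcomp Require Import all_boot ssralg ssrnum ssrint poly ring.
From Stdlib Require Import Classical.
Set Implicit Arguments. Unset Strict Implicit. Unset Printing Implicit Defensive.
Import GRing.Theory Num.Theory.

(* A homomorphism f : K -> X·H determines the partition P of V(K) into the
   connected components of the edges xy with (f x).1 = (f y).1, and f factors
   as a homomorphism K/P -> X together with a map K -> H that is a
   homomorphism on the edges inside blocks; let φ_H(P) count the latter.  So
     hom(K, X·H) = Σ_P hom(K/P, X) · φ_H(P)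
   over the partitions P of V(K) into connected blocks, which gives (1) => (2)
   and (3) => (2) at once.  For (2) => (3), apply (2) to G×J and G'×J, where ×
   is the categorical product: for K in cl(𝓕),
     Σ_P (hom(K/P, G) - hom(K/P, G')) φ_K(P) hom(K/P, J) = 0   for all J.
   The functions J |-> hom(K/P, J) are multiplicative for ×, so a Vandermonde
   argument separates the terms sharing the same function; evaluating at
   J = K/P, where it is positive, yields hom(K/P, G) = hom(K/P, G'). *)

Lemma is_homP (F G : sgraph) (f : {ffun F -> G}) :
  reflect (forall x y, adj x y -> adj (f x) (f y)) (is_hom f).
Proof.
apply: (iffP forallP) => [h x y | h x]; first exact: implyP (forallP (h x) y).
by apply/forallP => y; apply/implyP/h.
Qed.

Lemma hom_iso_leq (A B X : sgraph) : iso A B -> hom B X <= hom A X.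
Proof.
move=> [f [[g _ gK] adj_f]].
pose pre (h : {ffun B -> X}) : {ffun A -> X} := [ffun a => h (f a)].
have pre_inj : injective pre.
  by move=> h1 h2 /ffunP E; apply/ffunP => b; have := E (g b); rewrite !ffunE gK.
rewrite /hom -(card_imset _ pre_inj); apply/subset_leq_card/subsetP => h'.
case/imsetP => h /[!inE] /is_homP h_hom ->; apply/is_homP => x y xy.
by rewrite !ffunE; apply: h_hom; rewrite adj_f.
Qed.

Lemma iso_sym (A B : sgraph) : iso A B -> iso B A.
Proof.
move=> [f [[g fK gK] adj_f]]; exists g; split; first by exists f.
by move=> x y; rewrite -adj_f !gK.
Qed.

Lemma iso_refl (A : sgraph) : iso A A.
Proof. by exists id; split; [exists id|]. Qed.

Lemma hom_iso (A B X : sgraph) : iso A B -> hom A X = hom B X.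
Proof.
by move=> isoAB; apply/eqP; rewrite eqn_leq !hom_iso_leq //; apply: iso_sym.
Qed.

Lemma hom_refl_gt0 (A : sgraph) : 0 < hom A A.
Proof.
rewrite card_gt0; apply/set0Pn; exists [ffun x => x].
by rewrite inE; apply/is_homP => x y; rewrite !ffunE.
Qed.

Definition gprod_adj (G H : sgraph) : rel (G * H)%type :=
  fun u v => adj u.1 v.1 && adj u.2 v.2.

Lemma gprod_adj_sym G H : symmetric (@gprod_adj G H).
Proof. by move=> [a b] [c d]; rewrite /gprod_adj /= adj_sym (adj_sym b). Qed.

Lemma gprod_adj_irr G H : irreflexive (@gprod_adj G H).
Proof. by move=> [a b]; rewrite /gprod_adj /= adj_irr. Qed.

Definition gprod (G H : sgraph) : sgraph :=
  SGraph (@gprod_adj_sym G H) (@gprod_adj_irr G H).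

Lemma hom_gprod (K X Y : sgraph) : hom K (gprod X Y) = hom K X * hom K Y.
Proof.
rewrite /hom -cardsX.
pose pair_fun (p : {ffun K -> X} * {ffun K -> Y}) : {ffun K -> gprod X Y} :=
  [ffun a => (p.1 a, p.2 a)].
have pair_inj : injective pair_fun.
  move=> [p1 p2] [q1 q2] /ffunP E; congr pair; apply/ffunP => a;
  by have := E a; rewrite !ffunE => -[].
rewrite -(card_imset _ pair_inj); apply: eq_card => f; rewrite inE.
apply/is_homP/imsetP => [f_hom | [[p1 p2] /setXP[] /[!inE] /is_homP h1 /is_homP h2 ->]].
  exists ([ffun a => (f a).1], [ffun a => (f a).2]).
    by rewrite !inE; apply/andP; split; apply/is_homP => x y /f_hom /andP[];
       rewrite !ffunE.
  by apply/ffunP => a; rewrite !ffunE /=; case: (f a).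
by move=> x y xy; rewrite !ffunE; apply/andP; split; [apply: h1 | apply: h2].
Qed.

Lemma hom_equiv_gprod (C : gclass) (G G' J : sgraph) :
  hom_equiv C G G' -> hom_equiv C (gprod G J) (gprod G' J).
Proof. by move=> GG' K CK; rewrite !hom_gprod GG'. Qed.

Definition connected_partitions (K : sgraph) : {set {set {set K}}} :=
  [set P | partition P [set: K] && [forall B in P, induced_connected B]].

Lemma connected_partitionsP (K : sgraph) (P : {set {set K}}) :
  reflect (partition P [set: K] /\ forall B, B \in P -> induced_connected B)
          (P \in connected_partitions K).
Proof.
rewrite inE; apply: (iffP andP) => -[Ppart Pconn]; split=> //.
  by move=> B; apply/implyP; move/forallP: Pconn.
by apply/forallP => B; apply/implyP/Pconn.
Qed.

Lemma induced_connectedP (F : sgraph) (B : {set F}) :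
  reflect {in B &, forall x y, connect [rel u v | [&& adj u v, u \in B & v \in B]] x y}
          (induced_connected B).
Proof.
apply: (iffP forall_inP) => [h x y xB yB | h x xB]; first exact: forall_inP (h x xB) y yB.
by apply/forall_inP => y yB; apply: h.
Qed.

Definition is_block_hom (K H : sgraph) (P : {set {set K}}) (b : {ffun K -> H}) :=
  [forall x, forall y, [&& adj x y & y \in pblock P x] ==> adj (b x) (b y)].

Definition block_hom (K H : sgraph) (P : {set {set K}}) : nat :=
  #|[set b : {ffun K -> H} | is_block_hom P b]|.

Lemma is_block_homP (K H : sgraph) (P : {set {set K}}) (b : {ffun K -> H}) :
  reflect (forall x y, adj x y -> y \in pblock P x -> adj (b x) (b y))
          (is_block_hom P b).
Proof.
apply: (iffP forallP) => [h x y xy yPx | h x].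
  by apply: implyP (forallP (h x) y) _; rewrite xy.
by apply/forallP => y; apply/implyP => /andP[]; apply: h.
Qed.

Lemma block_hom_gt0 (K : sgraph) (P : {set {set K}}) : 0 < block_hom K P.
Proof.
rewrite card_gt0; apply/set0Pn; exists [ffun x => x].
by rewrite inE; apply/is_block_homP => x y xy _; rewrite !ffunE.
Qed.

Section LexprodDecomposition.
Variables K X H : sgraph.
Implicit Types (f : {ffun K -> lexprod X H}) (x y : K).

Definition fibre_rel (f : {ffun K -> lexprod X H}) : rel K :=
  fun x y => adj x y && ((f x).1 == (f y).1).

Definition fibre_partition f : {set {set K}} :=
  equivalence_partition (connect (fibre_rel f)) [set: K].

Lemma fibre_connect_equiv f :
  {in [set: K] & &, equivalence_rel (connect (fibre_rel f))}.
Proof.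
have fibre_sym : connect_sym (fibre_rel f).
  by apply: sym_connect_sym => x y; rewrite /fibre_rel adj_sym eq_sym.
move=> x y z _ _ _; split=> [|xy]; first exact: connect0.
by apply/idP/idP; apply: connect_trans; rewrite // fibre_sym.
Qed.

Lemma mem_pblock_fibre f x y :
  (y \in pblock (fibre_partition f) x) = connect (fibre_rel f) x y.
Proof. exact: (pblock_equivalence_partition (fibre_connect_equiv f) (in_setT x) (in_setT y)). Qed.

Lemma fibre_partition_connected f : fibre_partition f \in connected_partitions K.
Proof.
have Ppart := equivalence_partitionP (fibre_connect_equiv f).
apply/connected_partitionsP; split=> // B BP.
have blockB u : u \in B -> pblock (fibre_partition f) u = B.
  exact: def_pblock (partition_trivIset Ppart) BP.
apply/induced_connectedP => x y xB yB.
have xy : connect (fibre_rel f) x y by rewrite -mem_pblock_fibre blockB.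
case/connectP: xy yB => p xp -> _.
elim: p x xB xp => [|z p IHp] x xB /=; first by rewrite connect0.
case/andP=> /[dup] xz /andP[adj_xz _] zp.
have zB : z \in B by rewrite -(blockB x xB) mem_pblock_fibre connect1.
by apply: connect_trans (IHp z zB zp); apply: connect1; rewrite /= adj_xz xB.
Qed.

Section FixedPartition.
Variable P : {set {set K}}.
Hypothesis P_conn : P \in connected_partitions K.
Implicit Types (a : {ffun quotient_graph P -> X}) (b : {ffun K -> H}).

Let P_part : partition P [set: K].
Proof. by case/connected_partitionsP: P_conn. Qed.
Let P_triv : trivIset P := partition_trivIset P_part.
Let P_cover x : x \in cover P.
Proof. by rewrite (cover_partition P_part) in_setT. Qed.

Definition blk x : quotient_graph P := exist _ (pblock P x) (pblock_mem (P_cover x)).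

Lemma mem_blk x : x \in val (blk x).
Proof. by rewrite /= mem_pblock P_cover. Qed.

Lemma blk_val (B : quotient_graph P) x : x \in val B -> blk x = B.
Proof. by move=> xB; apply: val_inj; rewrite /= (def_pblock P_triv (valP B) xB). Qed.

Lemma eq_blk x y : (blk x == blk y) = (y \in pblock P x).
Proof. by rewrite -(eq_pblock _ P_triv (P_cover x)) -val_eqE. Qed.

Lemma adj_blk x y : blk x != blk y -> adj x y -> adj (blk x) (blk y).
Proof.
move=> neq xy; rewrite /= /qadj neq /=; apply/existsP; exists x.
by rewrite mem_blk /=; apply/existsP; exists y; rewrite mem_blk.
Qed.

Definition rep (B : quotient_graph P) : K :=
  xchoose (elimT (set0Pn _) (partition_neq0 P_part (valP B))).

Lemma blk_rep B : blk (rep B) = B.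
Proof. exact/blk_val/xchooseP. Qed.

Definition lift (a : {ffun quotient_graph P -> X}) (b : {ffun K -> H}) :
  {ffun K -> lexprod X H} := [ffun x => (a (blk x), b x)].

Lemma lift_inj : injective (fun ab => lift ab.1 ab.2).
Proof.
move=> [a1 b1] [a2 b2] /ffunP /= E; congr pair; apply/ffunP.
  by move=> B; have := E (rep B); rewrite !ffunE blk_rep => -[].
by move=> x; have := E x; rewrite !ffunE => -[].
Qed.

Lemma lift_is_hom a b : is_hom a -> is_block_hom P b -> is_hom (lift a b).
Proof.
move=> /is_homP a_hom /is_block_homP b_hom; apply/is_homP => x y xy.
rewrite !ffunE /= /lex_adj /=; have [same | neq] := eqVneq (blk x) (blk y).
  by rewrite same eqxx b_hom // -eq_blk same.
by rewrite a_hom ?orbT // adj_blk.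
Qed.

Lemma fibre_partition_lift a b : is_hom a -> fibre_partition (lift a b) = P.
Proof.
move=> /is_homP a_hom; rewrite -[RHS](equivalence_partition_pblock P_part).
apply: eq_imset => x; apply/setP => y; rewrite !inE /=; apply/idP/idP.
  move=> /connectP[p + ->]; rewrite -eq_blk.
  elim: p x => //= z p IHp x /andP[/andP[xz] + zp].
  rewrite !ffunE /=; have [-> _|neq] := eqVneq (blk x) (blk z); first exact: IHp.
  by move/eqP=> same; move: (a_hom _ _ (adj_blk neq xz)); rewrite same adj_irr.
move=> yx; case/connected_partitionsP: P_conn => _ /(_ _ (pblock_mem (P_cover x))).
move=> /induced_connectedP/(_ x y (mem_blk x) yx).
apply: connect_sub => u v /and3P[uv]; rewrite -!eq_blk => /eqP xu /eqP xv.
by apply: connect1; rewrite /fibre_rel uv !ffunE -xu -xv /=.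
Qed.

Definition quot_part (f : {ffun K -> lexprod X H}) : {ffun quotient_graph P -> X} :=
  [ffun B => (f (rep B)).1].

Definition block_part (f : {ffun K -> lexprod X H}) : {ffun K -> H} :=
  [ffun x => (f x).2].

Section Factorisation.
Variable f : {ffun K -> lexprod X H}.
Hypothesis fP : fibre_partition f = P.

Lemma fibre_const x y : y \in pblock P x -> (f x).1 = (f y).1.
Proof.
rewrite -fP mem_pblock_fibre => /connectP[p + ->].
by elim: p x => //= z p IHp x /andP[/andP[_ /eqP ->]]; apply: IHp.
Qed.

Lemma quot_part_blk x : quot_part f (blk x) = (f x).1.
Proof. by rewrite ffunE; apply/esym/fibre_const; rewrite -eq_blk blk_rep eqxx. Qed.

Lemma lift_factor : lift (quot_part f) (block_part f) = f.
Proof. by apply/ffunP => x; rewrite ffunE quot_part_blk ffunE; case: (f x). Qed.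

Hypothesis f_hom : is_hom f.

Lemma quot_part_hom : is_hom (quot_part f).
Proof.
apply/is_homP => B1 B2 /andP[+ /existsP[p /andP[pB1 /existsP[q /andP[qB2 pq]]]]].
rewrite -(blk_val pB1) -(blk_val qB2) !quot_part_blk => neq.
move/is_homP/(_ p q pq): f_hom; case/orP => [/andP[same_fst _] | //].
by move: neq; rewrite eq_blk -fP mem_pblock_fibre connect1 // /fibre_rel pq same_fst.
Qed.

Lemma block_part_hom : is_block_hom P (block_part f).
Proof.
apply/is_block_homP => x y xy yx; rewrite !ffunE.
by move/is_homP/(_ x y xy): f_hom; rewrite /= /lex_adj (fibre_const yx) eqxx adj_irr orbF.
Qed.

End Factorisation.

Lemma card_fibre_homs :
  #|[set f | is_hom f && (fibre_partition f == P)]| =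
  hom (quotient_graph P) X * block_hom H P.
Proof.
rewrite /hom /block_hom -cardsX -(card_imset _ lift_inj); apply: eq_card => f.
rewrite !inE; apply/andP/imsetP => [[f_hom /eqP fP] | [[a b]]].
  exists (quot_part f, block_part f); last by rewrite lift_factor.
  by rewrite !inE quot_part_hom ?block_part_hom.
case/setXP => /[!inE] a_hom b_hom ->.
by rewrite lift_is_hom // fibre_partition_lift.
Qed.

End FixedPartition.

Lemma hom_lexprod :
  hom K (lexprod X H) =
  \sum_(P in connected_partitions K) hom (quotient_graph P) X * block_hom H P.
Proof.
rewrite {1}/hom -sum1_card (partition_big fibre_partition (mem (connected_partitions K)));
  last by move=> f _; apply: fibre_partition_connected.
apply: eq_bigr => P P_conn; rewrite -card_fibre_homs // -sum1_card.
by apply: eq_bigl => f; rewrite !inE.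
Qed.

End LexprodDecomposition.

Section MultiplicativeRelations.
Local Open Scope ring_scope.
Variables (R : idomainType) (I : finType).

Lemma power_sums_eq0_fibre (S : {set I}) (a x : I -> R) :
  (forall m, \sum_(i in S) a i * x i ^+ m = 0) ->
  forall v, \sum_(i in S | x i == v) a i = 0.
Proof.
move=> power_sums v.
pose W := [seq x i | i <- enum [set i in S | x i != v]].
pose p : {poly R} := \prod_(w <- W) ('X - w%:P).
have p_eval t : p.[t] = \prod_(w <- W) (t - w).
  by rewrite /p horner_prod; apply: eq_bigr => w _; rewrite hornerXsubC.
have sum_p : \sum_(i in S) a i * p.[x i] = 0.
  under eq_bigr => i _ do rewrite horner_coef mulr_sumr.
  rewrite exchange_big big1 //= => k _.
  by under eq_bigr => i _ do rewrite mulrCA; rewrite -mulr_sumr power_sums mulr0.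
have p_root i : i \in S -> x i != v -> p.[x i] = 0.
  move=> iS xv; rewrite p_eval; apply/eqP; rewrite prodf_seq_eq0; apply/hasP.
  exists (x i); last by rewrite subrr eqxx.
  by apply/mapP; exists i => //; rewrite mem_enum !inE iS.
have p_v : p.[v] != 0.
  rewrite p_eval prodf_seq_neq0; apply/allP => w /mapP[i].
  by rewrite mem_enum !inE subr_eq0 eq_sym => /andP[_ xv] ->.
move: sum_p; rewrite (bigID (fun i => x i == v)) /= [X in _ + X]big1 ?addr0.
  under eq_bigr => i /andP[_ /eqP ->] do [].
  by rewrite -mulr_suml => /eqP; rewrite mulf_eq0 (negPf p_v) orbF => /eqP.
by move=> i /andP[iS xv]; rewrite p_root ?mulr0.
Qed.

Variables (T : Type) (mul : T -> T -> T) (f : I -> T -> R).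
Hypothesis f_mul : forall i s t, f i (mul s t) = f i s * f i t.

(* Multiplying the argument by powers of t0 turns the relation into power
   sums in the values f i t0, which splits it according to those values. *)
Lemma multiplicative_relation_class (c : I -> R) (S : {set I}) :
  (forall t, \sum_(i in S) c i * f i t = 0) -> forall i0, i0 \in S ->
  exists S' : {set I}, [/\ i0 \in S', {in S', forall i, f i =1 f i0} &
                           forall t, f i0 t * \sum_(i in S') c i = 0].
Proof.
have [n] := ubnP #|S|; elim: n S => // n IHn S Sn rel_S i0 i0S.
have [[i [iS [t0 neq]]] | all_eq] :=
  classic (exists i, i \in S /\ exists t, f i t <> f i0 t); last first.
  have S_eq : {in S, forall i, f i =1 f i0}.
    by move=> i iS t; apply: NNPP => neq; apply: all_eq; exists i; split; last exists t.
  exists S; split=> // t; rewrite -[RHS](rel_S t) mulr_sumr; apply: eq_bigr => i iS.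
  by rewrite mulrC S_eq.
pose S1 := [set j in S | f j t0 == f i0 t0].
have S1n : (#|S1| < n)%N.
  apply: leq_trans (proper_card _) Sn; apply/properP; split.
    by apply/subsetP => j; rewrite inE => /andP[].
  by exists i; rewrite // inE iS; apply/eqP.
apply: (IHn S1 S1n); last by rewrite inE i0S /=.
move=> t; pose mul_t0 m := iter m (mul^~ t0) t.
have f_iter m j : f j (mul_t0 m) = f j t * f j t0 ^+ m.
  by elim: m => [|m IHm]; rewrite ?expr0 ?mulr1 //= f_mul IHm exprSr mulrA.
rewrite -[RHS](@power_sums_eq0_fibre S (fun j => c j * f j t) (fun j => f j t0) _ (f i0 t0)).
  by apply: eq_bigl => j; rewrite inE.
move=> m; rewrite -[RHS](rel_S (mul_t0 m)).
by apply: eq_bigr => j _; rewrite f_iter mulrA.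
Qed.

End MultiplicativeRelations.

Lemma sub_cl (C : gclass) (F : sgraph) : C F -> cl C F.
Proof. by move=> CF G H; apply. Qed.

Lemma lex_preserved_of_sub_cl (C D : gclass) :
  (forall F, C F -> D F) -> (forall F, D F -> cl C F) ->
  contraction_closed D -> lex_preserved C.
Proof.
move=> CD D_cl D_closed G G' H GG' F CF; rewrite !hom_lexprod.
apply: eq_bigr => P /connected_partitionsP[P_part P_conn].
have DFP := D_closed F P (CD F CF) P_part P_conn _ (iso_refl _).
by rewrite (D_cl _ DFP G G' GG').
Qed.

Section QuotientHomEquiv.
Local Open Scope ring_scope.

Lemma quotient_hom_equiv (C : gclass) (F : sgraph) (P : {set {set F}}) (G G' : sgraph) :
  lex_preserved C -> cl C F -> P \in connected_partitions F -> hom_equiv C G G' ->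
  hom (quotient_graph P) G = hom (quotient_graph P) G'.
Proof.
move=> lexC clF P_conn GG'.
pose f (Q : {set {set F}}) J : int := (hom (quotient_graph Q) J)%:R.
pose c Q : int := (f Q G - f Q G') * (block_hom F Q)%:R.
have f_mul Q J J' : f Q (gprod J J') = f Q J * f Q J'.
  by rewrite /f hom_gprod natrM.
have lin_rel J : \sum_(Q in connected_partitions F) c Q * f Q J = 0.
  have := clF _ _ (lexC _ _ F (hom_equiv_gprod J GG')).
  rewrite !hom_lexprod => /(congr1 (fun n => n%:R : int)) /eqP.
  rewrite !natr_sum -subr_eq0 -sumrB => /eqP sum_eq0; rewrite -[RHS]sum_eq0.
  by apply: eq_bigr => Q _; rewrite !hom_gprod !natrM /c /f; ring.
have [S' [PS' S'_eq S'_rel]] := multiplicative_relation_class f_mul lin_rel P_conn.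
have hom_PP : hom (quotient_graph P) (quotient_graph P) != 0%N.
  by rewrite -lt0n hom_refl_gt0.
have block_hom_S' : (\sum_(Q in S') block_hom F Q != 0)%N.
  by rewrite -lt0n (bigD1 P) //= addn_gt0 block_hom_gt0.
have := S'_rel (quotient_graph P).
under eq_bigr => Q QS' do rewrite /c !(S'_eq Q QS').
rewrite -mulr_sumr => /eqP; rewrite !mulf_eq0 subr_eq0 eqr_nat -natr_sum !pnatr_eq0.
by rewrite (negPf hom_PP) (negPf block_hom_S') orbF => /eqP.
Qed.

End QuotientHomEquiv.

Lemma cl_contraction_closed (C : gclass) :
  lex_preserved C -> contraction_closed (cl C).
Proof.
move=> lexC F P clF P_part P_conn K isoK G G' GG'; rewrite !(hom_iso _ isoK).
by apply: quotient_hom_equiv lexC clF _ GG'; apply/connected_partitionsP.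
Qed.

Theorem theorem15 (C : gclass) :
  (contraction_closed C -> lex_preserved C) /\
  (lex_preserved C <-> contraction_closed (cl C)).
Proof.
split=> [C_closed|]; first exact: (lex_preserved_of_sub_cl (fun _ => id) (@sub_cl C)).
split=> [|cl_closed]; first exact: cl_contraction_closed.
exact: (lex_preserved_of_sub_cl (@sub_cl C) (fun _ => id)).
Qed.
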